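(* Let $X,Y$ be metrizable vector spaces over $K$ with metrics $d_X,d_Y$, and let $F:X\to Y$. For $r>0$ put $B_X(r)=\{x\in X:d_X(x,0)<r\}$ and $B_Y(r)=\{y\in Y:d_Y(y,0)<r\}$. (i) If $F\in B_d(X,Y)$, then for every $\epsilon_1>0$ there exists $\epsilon_2>0$ with $F[B_X(\epsilon_1)]\subset B_Y(\epsilon_2)$. (ii) Conversely, suppose that the limit $\lim_{x\to0}\frac{d_Y[F(x),0]}{d_X(x,0)}$ exists and is finite, that there are $\epsilon,\epsilon^*>0$ such that $F$ maps the complement of $B_X(\epsilon)$ into a bounded subset of $B_Y(\epsilon^* )$, and that for every $\epsilon_1>0$ there exists $\epsilon_2>0$ with $F[B_X(\epsilon_1)]\subset B_Y(\epsilon_2)$. Then $F\in B_d(X,Y)$.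
   Context: $K$ is $\mathbb{R}$ or $\mathbb{C}$. For maps $F_1,F_2:X\to Y$, $d(F_1,F_2)=\max\left\{\sup_{x\neq0,x\in X}\frac{d_Y[F_1(x),F_2(x)]}{d_X(x,0)},\ d_Y[F_1(0),F_2(0)]\right\}\in[0,\infty]$, and $B_d(X,Y)$ is the set of maps $F:X\to Y$ with $d(F,0)<\infty$. *)

From HB Require Import structures.
From mathcomp Require Import all_boot all_order all_algebra.
From mathcomp Require Import all_classical all_reals ereal.
From mathcomp Require Import complex.
Set Implicit Arguments. Unset Strict Implicit. Unset Printing Implicit Defensive.
Import Order.TTheory GRing.Theory Num.Theory.
Local Open Scope ring_scope.

Definition scalarK (R : realType) (b : bool) : numFieldType :=
  if b then (R : numFieldType) else ((R[i])%C : numFieldType).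

Section Metrizable.
Variables (R : realType) (K : numFieldType) (X : lmodType K).

Definition is_metric (d : X -> X -> R) : Prop :=
  [/\ (forall x y, 0 <= d x y),
      (forall x y, d x y = 0 <-> x = y),
      (forall x y, d x y = d y x) &
      (forall x y z, d x z <= d x y + d y z)].

(* X with the metric topology of d is a topological vector space:
   addition and scalar multiplication are (jointly) continuous. *)
Definition metrizable_vs (d : X -> X -> R) : Prop :=
  [/\ is_metric d,
      (forall (x y : X) (e : R), 0 < e ->
         exists2 del : R, 0 < del &
           forall x' y', d x' x < del -> d y' y < del -> d (x' + y') (x + y) < e) &
      (forall (a : K) (x : X) (e : R), 0 < e ->
         exists2 delK : K, 0 < delK &
         exists2 del : R, 0 < del &
           forall (a' : K) x', `|a' - a| < delK -> d x' x < del ->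
             d (a' *: x') (a *: x) < e)].
End Metrizable.

Section Bd.
Variables (R : realType) (K : numFieldType) (X Y : lmodType K).
Variables (dX : X -> X -> R) (dY : Y -> Y -> R).
Local Open Scope classical_set_scope.

Definition dmap (F1 F2 : X -> Y) : \bar R :=
  Order.max
    (ereal_sup [set ((dY (F1 x) (F2 x)) / dX x 0)%:E | x in [set x : X | x != 0]])
    (dY (F1 0) (F2 0))%:E.

Definition Bd (F : X -> Y) : Prop := (dmap F (fun _ => 0%R) < +oo)%E.

Definition ballX (r : R) : set X := [set x | dX x 0 < r].
Definition ballY (r : R) : set Y := [set y | dY y 0 < r].
End Bd.

From HB Require Import structures.
From mathcomp Require Import all_boot all_order all_algebra.
From mathcomp Require Import all_classical all_reals ereal.
From mathcomp Require Import lra.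
Set Implicit Arguments. Unset Strict Implicit. Unset Printing Implicit Defensive.
Import Order.TTheory GRing.Theory Num.Theory.
Local Open Scope ring_scope.
Local Open Scope classical_set_scope.

(* [F] lies in [B_d(X,Y)] exactly when the ratio [dY (F x) 0 / dX x 0] is
   bounded on [x != 0], since the term [dY (F 0) 0] of [d(F,0)] is finite.
   (i) A bounded ratio means [dY (F x) 0 <= C dX x 0], so balls go to balls.
   (ii) Near [0] the ratio is close to its limit; away from [0], on
   [dX x 0 >= del], it is at most [sup_x dY (F x) 0 / del], and [F] is bounded
   because it maps [B_X(eps)] and its complement into balls. *)

Section BoundedMaps.
Variables (R : realType) (K : numFieldType) (X Y : lmodType K).
Variables (dX : X -> X -> R) (dY : Y -> Y -> R) (F : X -> Y).
Hypothesis dX_gt0 : forall x, x != 0 -> 0 < dX x 0.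
Hypothesis dY_ge0 : forall y, 0 <= dY y 0.

Local Notation ratio x := (dY (F x) 0 / dX x 0).

Lemma BdP : Bd dX dY F <-> exists C : R, forall x, x != 0 -> ratio x <= C.
Proof.
rewrite /Bd /dmap gt_max ltry andbT.
set S := ereal_sup _; split=> [S_lt | [C ratio_le]].
- have [C S_le] : exists C : R, (S <= C%:E)%E.
    by case: S S_lt => [r _|//|_]; [exists r | exists 0; rewrite leNye].
  exists C => x x_neq0; rewrite -lee_fin (le_trans _ S_le) //.
  by apply: ereal_sup_ubound; exists x.
- apply: (@le_lt_trans _ _ C%:E); last exact: ltry.
  by apply: ge_ereal_sup => _ [x x_neq0 <-]; rewrite lee_fin ratio_le.
Qed.

Lemma ratio_bounded_image_ball (C : R) :
  (forall x, x != 0 -> ratio x <= C) ->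
  forall e1 : R, 0 < e1 ->
    exists2 e2 : R, 0 < e2 & F @` ballX dX e1 `<=` ballY dY e2.
Proof.
move=> ratio_le e1 e1_gt0.
have [{}C C_ge0 {}ratio_le] : exists2 C' : R, 0 <= C' &
    forall x, x != 0 -> ratio x <= C'.
  exists (Num.max C 0); first by rewrite le_max lexx orbT.
  by move=> x /ratio_le /le_trans; apply; rewrite le_max lexx.
have Ce1_ge0 : 0 <= C * e1 by rewrite mulr_ge0 // ltW.
have F0_ge0 := dY_ge0 (F 0).
exists (C * e1 + dY (F 0) 0 + 1); first lra.
move=> _ [x x_e1 <-]; rewrite /ballY /=; rewrite /ballX /= in x_e1.
have [->|x_neq0] := eqVneq x 0; first lra.
have Fx_le : dY (F x) 0 <= C * dX x 0 by rewrite -ler_pdivrMr ?dX_gt0 ?ratio_le.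
have : C * dX x 0 <= C * e1 by rewrite ler_wpM2l // ltW.
lra.
Qed.

Lemma ratio_le_near0 (L : R) :
  (forall e : R, 0 < e -> exists2 del : R, 0 < del &
     forall x, x != 0 -> dX x 0 < del -> `|ratio x - L| < e) ->
  exists2 del : R, 0 < del &
    forall x, x != 0 -> dX x 0 < del -> ratio x <= `|L| + 1.
Proof.
move=> ratio_cvg; have [del del_gt0 ratio_near] := ratio_cvg 1 ltr01.
exists del => // x x_neq0 x_del.
have := ratio_near x x_neq0 x_del.
have := ler_norm (ratio x - L); have := ler_norm L; lra.
Qed.

Lemma ratio_le_away0 (B del : R) :
  0 < del -> (forall x, dY (F x) 0 <= B) ->
  forall x, del <= dX x 0 -> ratio x <= B / del.
Proof.
move=> del_gt0 F_le x del_le; have dx_gt0 := lt_le_trans del_gt0 del_le.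
have B_ge0 : 0 <= B := le_trans (dY_ge0 (F 0)) (F_le 0).
rewrite ler_pdivrMr // (le_trans (F_le x)) // mulrAC ler_pdivlMr //.
by rewrite ler_wpM2l.
Qed.

Lemma bounded_image_ball_compl (eps e2 M : R) :
  F @` ballX dX eps `<=` ballY dY e2 ->
  F @` (~` ballX dX eps) `<=` ballY dY M ->
  forall x, dY (F x) 0 <= Num.max e2 M.
Proof.
move=> F_ball F_compl x; have [x_eps|x_eps] := pselect (ballX dX eps x).
- have := F_ball _ (ex_intro2 _ _ x x_eps erefl).
  by rewrite /ballY /= le_max => /ltW ->.
- have := F_compl _ (ex_intro2 _ _ x x_eps erefl).
  by rewrite /ballY /= le_max => /ltW ->; rewrite orbT.
Qed.

End BoundedMaps.

Theorem theorem8 (R : realType) (b : bool)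
  (X Y : lmodType (scalarK R b)) (dX : X -> X -> R) (dY : Y -> Y -> R)
  (hX : metrizable_vs dX) (hY : metrizable_vs dY) (F : X -> Y) :
  (* (i) *)
  (Bd dX dY F ->
     forall e1 : R, 0 < e1 ->
       exists2 e2 : R, 0 < e2 & F @` ballX dX e1 `<=` ballY dY e2)
  /\
  (* (ii) *)
  ((exists L : R, forall e : R, 0 < e ->
       exists2 del : R, 0 < del &
         forall x : X, x != 0 -> dX x 0 < del ->
           `|dY (F x) 0 / dX x 0 - L| < e) ->
   (exists eps : R, exists epsS : R, [/\ 0 < eps, 0 < epsS &
       exists2 M : R, 0 <= M &
         F @` (~` ballX dX eps) `<=` ballY dY epsS `&` ballY dY M]) ->
   (forall e1 : R, 0 < e1 ->
       exists2 e2 : R, 0 < e2 & F @` ballX dX e1 `<=` ballY dY e2) ->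
   Bd dX dY F).
Proof.
case: hX => -[dX_ge0 dX_eq0 _ _] _ _; case: hY => -[dY_ge0 _ _ _] _ _.
have dX_gt0 x : x != 0 -> 0 < dX x 0.
  by move=> x_neq0; rewrite lt_def dX_ge0 andbT; apply: contra_neq x_neq0 => /dX_eq0.
split=> [/BdP[C ratio_le]|[L ratio_cvg] [eps [epsS [eps_gt0 _ [M _ F_compl]]]] F_ball].
  exact: ratio_bounded_image_ball ratio_le.
have [del del_gt0 ratio_near] := ratio_le_near0 ratio_cvg.
have [e2 _ F_eps] := F_ball eps eps_gt0.
have F_le := bounded_image_ball_compl F_eps (fun _ Fx => (F_compl _ Fx).2).
apply/BdP; exists (Num.max (`|L| + 1) (Num.max e2 M / del)) => x x_neq0.
rewrite le_max; have [x_del|del_le] := ltP (dX x 0) del.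
  by rewrite ratio_near.
by rewrite (ratio_le_away0 (fun y => dY_ge0 y 0) del_gt0 F_le del_le) orbT.
Qed.
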